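(* In a non-degenerate RiFle assignment game, the set of all stable outcomes is a lattice under the partial order $\ge_P$ of $P$-preferences.
   Context: A RiFle assignment game consists of two disjoint sets of agents $P=\{p_1,\dots,p_n\}$ and $Q=\{q_1,\dots,q_n\}$, a pair of nonnegative real numbers $(\beta_{ij},\gamma_{ij})$ for every pair $(p_i,q_j)\in P\times Q$ (write $\alpha_{ij}=\beta_{ij}+\gamma_{ij}$), and a designation of every agent as rigid or flexible. Let $\mathcal R$ be the set of pairs with at least one rigid agent and $\mathcal F$ the set of pairs with both agents flexible. An outcome $(\bar u,\bar v;\mu)$ consists of a matching $\mu$ between $P$ and $Q$ (write $p_i\stackrel{\mu}{\longleftrightarrow} q_j$) and payoff vectors $\bar u,\bar v\in\mathbb R^n$. It is feasible if: (1) $u_i\ge0$, $v_j\ge0$; (2) if a rigid $p_i$ is matched to $q_j$ then $u_i=\beta_{ij}$ and, if $q_j$ is flexible, $v_j\ge\gamma_{ij}$; symmetrically for a rigid $q_j$ matched to $p_i$: $v_j=\gamma_{ij}$ and, if $p_i$ is flexible, $u_i\ge\beta_{ij}$; (3) $\sum_iu_i+\sum_jv_j=\sum_{p_i\stackrel{\mu}{\longleftrightarrow}q_j}\alpha_{ij}$. It is stable if feasible and $u_i+v_j\ge\alpha_{ij}$ for $(p_i,q_j)\in\mathcal F$ and ($u_i\ge\beta_{ij}$ or $v_j\ge\gamma_{ij}$) for $(p_i,q_j)\in\mathcal R$. Reservation prices are modeled by rigid dummy agents; for the following definition an agent left unmatched by a matching is regarded as matched to a rigid dummy agent (whose prescribed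 share $\beta$ or $\gamma$ for him is his reservation price). Given a coalition $C\subseteq P\cup Q$ and a matching $\mu$, the total payoff to $C$ under $\mu$ is forced if every pair matched under $\mu$ with one agent in $C$ and the other outside $C$ is rigid (contains a rigid agent); the forced payoff is then $\sum_{p_i\in C,\ p_i\stackrel{\mu}{\longleftrightarrow}q_j}\beta_{ij}+\sum_{q_j\in C,\ p_i\stackrel{\mu}{\longleftrightarrow}q_j}\gamma_{ij}$. The game is non-degenerate if for any two matchings $\mu,\mu'$: whenever $C$ is a minimal coalition such that the payoff to $C$ is forced under both $\mu$ and $\mu'$, and the two forced payoffs are equal, then $\mu$ and $\mu'$ coincide on $C$. For outcomes, $(\bar u,\bar v;\mu)\ge_P(\bar u',\bar v';\mu')$ means $\bar u\ge\bar u'$ and $\bar v\le\bar v'$ componentwise. *)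

From HB Require Import structures.
From mathcomp Require Import all_boot all_order all_algebra.
From mathcomp Require Import reals.
Set Implicit Arguments. Unset Strict Implicit. Unset Printing Implicit Defensive.
Import Order.TTheory GRing.Theory Num.Theory.
Local Open Scope ring_scope.

Section RiFle.
Variables (R : realType) (n : nat).

(* Agents p_1..p_n and q_1..q_n are both indexed by 'I_n. *)
Record rifle_game := RiFleGame {
  beta : 'I_n -> 'I_n -> R;     (* share prescribed to p_i in pair (p_i,q_j) *)
  gamma : 'I_n -> 'I_n -> R;    (* share prescribed to q_j in pair (p_i,q_j) *)
  rigidP : pred 'I_n;
  rigidQ : pred 'I_n
}.

Variable G : rifle_game.

Definition nonneg_game : Prop :=
  forall i j, 0 <= beta G i j /\ 0 <= gamma G i j.

Definition alpha (i j : 'I_n) : R := beta G i j + gamma G i j.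

Definition rigid_pair (i j : 'I_n) : bool := rigidP G i || rigidQ G j.

Definition is_matching (M : {set 'I_n * 'I_n}) : Prop :=
  forall i j i' j', (i, j) \in M -> (i', j') \in M -> (i = i' <-> j = j').

Record outcome := Outcome {
  ou : {ffun 'I_n -> R};
  ov : {ffun 'I_n -> R};
  om : {set 'I_n * 'I_n}
}.

Definition feasible (x : outcome) : Prop :=
  [/\ (forall i, 0 <= ou x i) /\ (forall j, 0 <= ov x j),
      is_matching (om x),
      (forall i j, (i, j) \in om x -> rigidP G i ->
          ou x i = beta G i j /\ (~~ rigidQ G j -> gamma G i j <= ov x j)),
      (forall i j, (i, j) \in om x -> rigidQ G j ->
          ov x j = gamma G i j /\ (~~ rigidP G i -> beta G i j <= ou x i)) &
      \sum_i ou x i + \sum_j ov x j = \sum_(p in om x) alpha p.1 p.2 ].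

Definition stable (x : outcome) : Prop :=
  feasible x /\
  (forall i j,
     if rigid_pair i j then beta G i j <= ou x i \/ gamma G i j <= ov x j
     else alpha i j <= ou x i + ov x j).

Definition geP (x y : outcome) : Prop :=
  (forall i, ou y i <= ou x i) /\ (forall j, ov x j <= ov y j).

(* Coalitions C = CP (subset of P) \cup CQ (subset of Q). *)
(* Payoff of C is forced under M: every matched pair crossing the boundary of C
   is rigid.  An unmatched agent is matched to a rigid dummy (outside C), so it
   never violates the condition. *)
Definition forced (M : {set 'I_n * 'I_n}) (CP CQ : {set 'I_n}) : Prop :=
  forall i j, (i, j) \in M -> (i \in CP) != (j \in CQ) -> rigid_pair i j.

(* The forced payoff; an unmatched agent in C contributes its reservation
   price, which is 0 in this model. *)
Definition forced_payoff (M : {set 'I_n * 'I_n}) (CP CQ : {set 'I_n}) : R :=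
  \sum_(p in M | p.1 \in CP) beta G p.1 p.2
  + \sum_(p in M | p.2 \in CQ) gamma G p.1 p.2.

Definition nonempty_coalition (CP CQ : {set 'I_n}) : bool :=
  (CP != set0) || (CQ != set0).

Definition proper_subcoalition (CP' CQ' CP CQ : {set 'I_n}) : bool :=
  [&& CP' \subset CP, CQ' \subset CQ & (CP' != CP) || (CQ' != CQ)].

Definition minimal_forced_both (M M' : {set 'I_n * 'I_n}) (CP CQ : {set 'I_n})
  : Prop :=
  [/\ nonempty_coalition CP CQ, forced M CP CQ, forced M' CP CQ &
      forall CP' CQ', nonempty_coalition CP' CQ' ->
        proper_subcoalition CP' CQ' CP CQ ->
        ~ (forced M CP' CQ' /\ forced M' CP' CQ')].

Definition coincide_on (M M' : {set 'I_n * 'I_n}) (CP CQ : {set 'I_n}) : Prop :=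
  (forall i j, i \in CP -> ((i, j) \in M <-> (i, j) \in M')) /\
  (forall i j, j \in CQ -> ((i, j) \in M <-> (i, j) \in M')).

Definition nondegenerate : Prop :=
  forall (M M' : {set 'I_n * 'I_n}) (CP CQ : {set 'I_n}),
    is_matching M -> is_matching M' ->
    minimal_forced_both M M' CP CQ ->
    forced_payoff M CP CQ = forced_payoff M' CP CQ ->
    coincide_on M M' CP CQ.

Definition stable_join (x y z : outcome) : Prop :=
  [/\ stable z, geP z x, geP z y &
      forall w, stable w -> geP w x -> geP w y -> geP w z].

Definition stable_meet (x y z : outcome) : Prop :=
  [/\ stable z, geP x z, geP y z &
      forall w, stable w -> geP x w -> geP y w -> geP z w].

End RiFle.

From HB Require Import structures.
From mathcomp Require Import all_boot all_order all_algebra.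
From mathcomp Require Import reals.
From mathcomp.algebra_tactics Require Import lra.

Set Implicit Arguments. Unset Strict Implicit. Unset Printing Implicit Defensive.
Import Order.TTheory GRing.Theory Num.Theory.
Local Open Scope ring_scope.

(** Fix stable outcomes x and y. The gain of an agent is how much x beats y
   at that agent in the P-order, and an agent is linked to its x-partner if it
   is in P, to its y-partner if it is in Q. Stability makes the gain
   nondecreasing along flexible links and forbids a rigid link from a positive
   to a negative gain.
   Let X consist of the agents of positive gain and of the zero-gain agents
   from which a path of zero-gain agents leads to one. Once X is known to be
   closed under both matchings, the outcome that follows x on X and y off X is
   stable with the pointwise max/min payoffs of x and y, i.e. it is the join;
   exchanging the roles of x and y on X gives the meet.
   For the closure, consider the zero-gain agents that lead to no positive
   agent, are reached from no negative one, and have different partners in x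
   and y. Every link leaving or entering this coalition is rigid, so its
   payoff is forced under both matchings, with equal values since the gains
   vanish; by non-degeneracy one of its members keeps its partner, so the
   coalition is empty. Hence a zero-gain agent linked from a positive one
   leads to a positive one, and X is closed along links. As links form a
   partial injection of a finite set, X is then also closed backward. *)

Section Reach.
Variables (T : finType) (r : rel T) (Z B : {set T}).

Definition reach_step (S : {set T}) : {set T} :=
  [set a in Z | [exists b, r a b && (b \in B :|: S)]].

Lemma reach_step_mono : {homo reach_step : S S' / S \subset S'}.
Proof.
move=> S S' sSS'; apply/subsetP => a; rewrite !inE => /andP[-> /existsP[b]].
case/andP=> rab Sb; apply/existsP; exists b; rewrite rab /= !inE.
by case/setUP: Sb => [-> // | /(subsetP sSS') ->]; rewrite orbT.
Qed.

(* The elements of [Z] from which an [r]-path inside [Z] enters [B]. *)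
Definition reach : {set T} := fixset reach_step.

Lemma reachE a :
  (a \in reach) = (a \in Z) && [exists b, r a b && (b \in B :|: reach)].
Proof. by rewrite {1}/reach -(fixsetK reach_step_mono) inE. Qed.

Lemma reach_sub : reach \subset Z.
Proof. by apply/subsetP => a; rewrite reachE => /andP[]. Qed.

Lemma reach_closed a b : a \in Z -> r a b -> b \in B :|: reach -> a \in reach.
Proof. by move=> Za rab Hb; rewrite reachE Za; apply/existsP; exists b; rewrite rab. Qed.

Lemma reach_succ a : a \in reach -> exists2 b, r a b & b \in B :|: reach.
Proof. by rewrite reachE => /andP[_ /existsP[b /andP[]]]; exists b. Qed.

End Reach.

Section InjectiveRel.
Variables (T : finType) (r : rel T) (A : {set T}).
Hypothesis r_inj : forall a a' b, r a b -> r a' b -> a = a'.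

Lemma pred_in_of_succ_in :
  (forall a, a \in A -> exists2 b, r a b & b \in A) ->
  forall b, b \in A -> exists2 a, r a b & a \in A.
Proof.
move=> succA; pose f a := odflt a [pick b in A | r a b].
have fP a : a \in A -> r a (f a) && (f a \in A).
  move=> Aa; rewrite /f; case: pickP => [b /andP[Ab rab] | none] /=.
    by rewrite rab Ab.
  by have [b rab Ab] := succA a Aa; move: (none b); rewrite Ab rab.
have f_inj : {in A &, injective f}.
  move=> a a' /fP/andP[ra _] /fP/andP[ra' _] E.
  by rewrite -E in ra'; apply: r_inj ra ra'.
have fA : f @: A = A.
  apply/eqP; rewrite eqEcard card_in_imset // leqnn andbT.
  by apply/subsetP => _ /imsetP[a Aa ->]; case/andP: (fP a Aa).
move=> b Ab; have : b \in f @: A by rewrite fA.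
by case/imsetP=> a Aa ->; exists a => //; case/andP: (fP a Aa).
Qed.

End InjectiveRel.

Section RiFle.
Variables (R : realType) (n : nat) (G : rifle_game R n).
Implicit Types (M : {set 'I_n * 'I_n}) (x y z : outcome R n).

Definition matchedP M : {set 'I_n} := [set p.1 | p in M].
Definition matchedQ M : {set 'I_n} := [set p.2 | p in M].

Lemma matching_fst_inj M : is_matching M -> {in M &, injective fst}.
Proof.
move=> Mm [i j] [i' j'] Mij Mij' /= Ei; subst i'.
by rewrite ((Mm _ _ _ _ Mij Mij').1 erefl).
Qed.

Lemma matching_snd_inj M : is_matching M -> {in M &, injective snd}.
Proof.
move=> Mm [i j] [i' j'] Mij Mij' /= Ej; subst j'.
by rewrite ((Mm _ _ _ _ Mij Mij').2 erefl).
Qed.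

Lemma sum_matchedP M (f : 'I_n -> R) : is_matching M ->
  \sum_i f i = \sum_(p in M) f p.1 + \sum_(i | i \notin matchedP M) f i.
Proof.
by move=> Mm; rewrite (bigID (mem (matchedP M))) big_imset //; apply: matching_fst_inj.
Qed.

Lemma sum_matchedQ M (f : 'I_n -> R) : is_matching M ->
  \sum_j f j = \sum_(p in M) f p.2 + \sum_(j | j \notin matchedQ M) f j.
Proof.
by move=> Mm; rewrite (bigID (mem (matchedQ M))) big_imset //; apply: matching_snd_inj.
Qed.

Definition tight M (u v : 'I_n -> R) : Prop :=
  [/\ forall i j, (i, j) \in M -> u i + v j = alpha G i j,
      forall i, i \notin matchedP M -> u i = 0 &
      forall j, j \notin matchedQ M -> v j = 0].

Lemma tight_sum M u v : is_matching M -> tight M u v ->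
  \sum_i u i + \sum_j v j = \sum_(p in M) alpha G p.1 p.2.
Proof.
move=> Mm [uv u0 v0]; rewrite (sum_matchedP u Mm) (sum_matchedQ v Mm).
rewrite [\sum_(i | _) u i]big1 // [\sum_(j | _) v j]big1 // !addr0 -big_split.
by apply: eq_bigr => -[i j]; apply: uv.
Qed.

Lemma sum_tight M u v : is_matching M ->
  (forall i, 0 <= u i) -> (forall j, 0 <= v j) ->
  (forall i j, (i, j) \in M -> alpha G i j <= u i + v j) ->
  \sum_i u i + \sum_j v j = \sum_(p in M) alpha G p.1 p.2 -> tight M u v.
Proof.
move=> Mm u0 v0 uv_ge; rewrite (sum_matchedP u Mm) (sum_matchedQ v Mm).
set U0 := \sum_(i | _) u i; set V0 := \sum_(j | _) v j => Hsum.
have slack_ge0 p : p \in M -> 0 <= u p.1 + v p.2 - alpha G p.1 p.2.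
  by case: p => i j /uv_ge; rewrite subr_ge0.
have U0_ge0 : 0 <= U0 by apply: sumr_ge0.
have V0_ge0 : 0 <= V0 by apply: sumr_ge0.
have S_ge0 : 0 <= \sum_(p in M) (u p.1 + v p.2 - alpha G p.1 p.2).
  exact: sumr_ge0.
have S_eq : \sum_(p in M) (u p.1 + v p.2 - alpha G p.1 p.2) = - (U0 + V0).
  by rewrite sumrB big_split /=; lra.
have S0 : \sum_(p in M) (u p.1 + v p.2 - alpha G p.1 p.2) = 0 by lra.
have U00 : U0 = 0 by lra.
have V00 : V0 = 0 by lra.
split.
- by move=> i j /(psumr_eq0P slack_ge0 S0) /= /eqP; rewrite subr_eq0 => /eqP.
- by move=> i; apply: (psumr_eq0P (fun i _ => u0 i) U00).
- by move=> j; apply: (psumr_eq0P (fun j _ => v0 j) V00).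
Qed.

Definition unblocked i j (u v : R) : Prop :=
  if rigid_pair G i j then beta G i j <= u \/ gamma G i j <= v
  else alpha G i j <= u + v.

Lemma unblocked_mono i j u v u' v' :
  u <= u' -> v <= v' -> unblocked i j u v -> unblocked i j u' v'.
Proof. by rewrite /unblocked; case: ifP => _ uu vv; lra. Qed.

Lemma stable_unblocked x : stable G x -> forall i j, unblocked i j (ou x i) (ov x j).
Proof. by case. Qed.

Lemma stable_matching x : stable G x -> is_matching (om x).
Proof. by case=> -[]. Qed.

Lemma stable_ge0 x : stable G x -> (forall i, 0 <= ou x i) /\ (forall j, 0 <= ov x j).
Proof. by case=> -[]. Qed.

Lemma stable_matched_ge x i j : stable G x -> (i, j) \in om x ->
  alpha G i j <= ou x i + ov x j.
Proof.
case=> -[_ _ rigP rigQ _] /(_ i j) + xij; rewrite /unblocked /rigid_pair /alpha.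
case rPi: (rigidP G i); case rQj: (rigidQ G j) => //= _.
- by have [-> _] := rigP _ _ xij rPi; have [-> _] := rigQ _ _ xij rQj.
- by have [-> /(_ (negbT rQj))] := rigP _ _ xij rPi; lra.
- by have [-> /(_ (negbT rPi))] := rigQ _ _ xij rQj; lra.
Qed.

Lemma stable_tight x : stable G x -> tight (om x) (ou x) (ov x).
Proof.
move=> Sx; have [u0 v0] := stable_ge0 Sx.
apply: sum_tight (stable_matching Sx) u0 v0 _ _; last by case: Sx => -[].
by move=> i j; apply: stable_matched_ge.
Qed.

Lemma stable_rigid x i j : stable G x -> (i, j) \in om x -> rigid_pair G i j ->
  ou x i = beta G i j /\ ov x j = gamma G i j.
Proof.
move=> Sx xij; have [/(_ i j xij) uv _ _] := stable_tight Sx.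
case: Sx => -[_ _ rigP rigQ _] _; rewrite /alpha in uv.
case/orP => [/(rigP _ _ xij) [ui _] | /(rigQ _ _ xij) [vj _]]; split=> //; lra.
Qed.

Lemma forced_payoffE x CP CQ : stable G x -> forced G (om x) CP CQ ->
  forced_payoff G (om x) CP CQ = \sum_(i in CP) ou x i + \sum_(j in CQ) ov x j.
Proof.
move=> Sx fx; have Mx := stable_matching Sx; have [uv u0 v0] := stable_tight Sx.
rewrite /forced_payoff !big_mkcondr.
rewrite [\sum_(i in CP) _]big_mkcond [\sum_(j in CQ) _]big_mkcond /=.
rewrite (sum_matchedP _ Mx) (sum_matchedQ _ Mx).
rewrite [\sum_(i | i \notin _) _]big1 => [|i /u0 ->]; last by rewrite if_same.
rewrite [\sum_(j | j \notin _) _]big1 => [|j /v0 ->]; last by rewrite if_same.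
rewrite !addr0 -!big_split; apply: eq_bigr => -[i j] /= xij.
have [rij | flex] := boolP (rigid_pair G i j).
  by have [-> ->] := stable_rigid Sx xij rij.
have sameC : (i \in CP) = (j \in CQ) by apply/eqP; apply: contraNT flex; apply: fx.
have := uv i j xij; rewrite /alpha sameC; case: (j \in CQ) => //; lra.
Qed.

Lemma matched_not_both_worse x y i j : stable G x -> stable G y ->
  (i, j) \in om x -> ou y i < ou x i -> ov y j < ov x j -> False.
Proof.
move=> Sx Sy xij ltu ltv; have := stable_unblocked Sy i j; rewrite /unblocked.
case: ifP => [rij | _]; last by have [/(_ i j xij)] := stable_tight Sx; lra.
by have [ui vj] := stable_rigid Sx xij rij; lra.
Qed.

Lemma flexible_matched_le x y i j : stable G x -> stable G y ->
  (i, j) \in om x -> ~~ rigid_pair G i j -> ou x i - ou y i <= ov y j - ov x j.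
Proof.
move=> Sx Sy xij /negbTE flex; have := stable_unblocked Sy i j.
by rewrite /unblocked flex; have [/(_ i j xij)] := stable_tight Sx; lra.
Qed.

Local Notation agent := ('I_n + 'I_n)%type.

Definition coalP (D : {set agent}) : {set 'I_n} := [set i | inl i \in D].
Definition coalQ (D : {set agent}) : {set 'I_n} := [set j | inr j \in D].
Definition coalition (CP CQ : {set 'I_n}) : {set agent} :=
  [set a | match a with inl i => i \in CP | inr j => j \in CQ end].

Lemma coalPK CP CQ : coalP (coalition CP CQ) = CP.
Proof. by apply/setP => i; rewrite !inE. Qed.

Lemma coalQK CP CQ : coalQ (coalition CP CQ) = CQ.
Proof. by apply/setP => j; rewrite !inE. Qed.

Definition matching_closed M (X : {set agent}) : Prop :=
  forall i j, (i, j) \in M -> (inl i \in X) = (inr j \in X).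

Section TwoStable.
Variables x y : outcome R n.
Hypotheses (Sx : stable G x) (Sy : stable G y) (ND : nondegenerate G).
Implicit Types (a b : agent) (C D : {set agent}).

Definition pgain (a : agent) : R :=
  match a with inl i => ou x i - ou y i | inr j => ov y j - ov x j end.

Definition succ (a b : agent) : bool :=
  match a, b with
  | inl i, inr j => (i, j) \in om x
  | inr j, inl i => (i, j) \in om y
  | _, _ => false
  end.

Definition rigid_link (a b : agent) : bool :=
  match a, b with
  | inl i, inr j | inr j, inl i => rigid_pair G i j
  | _, _ => true
  end.

Definition same_partner (a : agent) : bool := [forall b, succ a b == succ b a].

Lemma succ_fun a b b' : succ a b -> succ a b' -> b = b'.
Proof.
have [Mx My] := (stable_matching Sx, stable_matching Sy).
case: a b b' => [i|j] [i1|j1] [i2|j2] //= H1 H2.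
  by rewrite ((Mx _ _ _ _ H1 H2).1 erefl).
by rewrite ((My _ _ _ _ H1 H2).2 erefl).
Qed.

Lemma succ_inj a a' b : succ a b -> succ a' b -> a = a'.
Proof.
have [Mx My] := (stable_matching Sx, stable_matching Sy).
case: a a' b => [i|j] [i1|j1] [i2|j2] //= H1 H2.
  by rewrite ((Mx _ _ _ _ H1 H2).2 erefl).
by rewrite ((My _ _ _ _ H1 H2).1 erefl).
Qed.

Lemma succ_flex a b : succ a b -> ~~ rigid_link a b -> pgain a <= pgain b.
Proof.
case: a b => [i|j] [i1|j1] //= ab flex.
  exact: flexible_matched_le Sx Sy ab flex.
by have := flexible_matched_le Sy Sx ab flex; lra.
Qed.

Lemma succ_pgain_ge0 a b : succ a b -> 0 < pgain a -> 0 <= pgain b.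
Proof.
case: a b => [i|j] [i1|j1] //= ab; rewrite subr_gt0 subr_ge0 leNgt => lt.
  by apply/negP; apply: matched_not_both_worse Sx Sy ab lt.
by apply/negP => ltu; apply: matched_not_both_worse Sy Sx ab ltu lt.
Qed.

Lemma succ2_pgain a b : succ a b -> succ b a -> pgain a = pgain b.
Proof.
have [[tx _ _] [ty _ _]] := (stable_tight Sx, stable_tight Sy).
case: a b => [i|j] [i1|j1] //= ab ba.
  by have := tx _ _ ab; have := ty _ _ ba; lra.
by have := tx _ _ ba; have := ty _ _ ab; lra.
Qed.

Lemma pgain_gt0_succ a : 0 < pgain a -> exists b, succ a b.
Proof.
have [[_ ux0 _] [_ _ vy0]] := (stable_tight Sx, stable_tight Sy).
have [[uy_ge0 _] [_ vx_ge0]] := (stable_ge0 Sy, stable_ge0 Sx).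
case: a => [i|j] /=; rewrite subr_gt0 => lt.
  have [/imsetP[[i' j] xij /= ->] | /ux0 ui0] := boolP (i \in matchedP (om x)).
    by exists (inr j).
  by have := uy_ge0 i; lra.
have [/imsetP[[i j'] yij /= ->] | /vy0 vj0] := boolP (j \in matchedQ (om y)).
  by exists (inl i).
by have := vx_ge0 j; lra.
Qed.

Lemma same_partner_succ a b : same_partner a -> succ a b = succ b a.
Proof. by move/forallP/(_ b)/eqP. Qed.

Lemma same_partner_pred a b : same_partner b -> succ a b = succ b a.
Proof. by move/forallP/(_ a)/eqP. Qed.

Lemma succ2_same_partner a b : succ a b -> succ b a -> same_partner a.
Proof.
move=> ab ba; apply/forallP => c; apply/eqP; apply/idP/idP => [ac | ca].
  by rewrite -(succ_fun ab ac).
by rewrite (succ_inj ca ba).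
Qed.

Definition pos_gain : {set agent} := [set a | 0 < pgain a].
Definition neg_gain : {set agent} := [set a | pgain a < 0].
Definition zero_gain : {set agent} := [set a | pgain a == 0].

Definition sealed (D : {set agent}) : bool :=
  [forall a, forall b, succ a b && ((a \in D) != (b \in D)) ==> rigid_link a b].

Lemma sealedP D :
  reflect (forall a b, succ a b -> (a \in D) != (b \in D) -> rigid_link a b)
          (sealed D).
Proof.
apply: (iffP forallP) => [sD a b ab cross | sD a].
  by move/forallP/(_ b)/implyP: (sD a); apply; rewrite ab.
by apply/forallP => b; apply/implyP => /andP[]; apply: sD.
Qed.

Lemma sealed_forced D : sealed D ->
  forced G (om x) (coalP D) (coalQ D) /\ forced G (om y) (coalP D) (coalQ D).
Proof.
move/sealedP=> sD; split=> i j ij; rewrite !inE => cross.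
  exact: (sD (inl i) (inr j)).
by rewrite eq_sym in cross; apply: (sD (inr j) (inl i)).
Qed.

Lemma forced_sealed CP CQ :
  forced G (om x) CP CQ -> forced G (om y) CP CQ -> sealed (coalition CP CQ).
Proof.
move=> fx fy; apply/sealedP => -[i|j] [i'|j'] //= ab; rewrite !inE => cross.
  exact: fx.
by rewrite eq_sym in cross; apply: fy.
Qed.

Lemma minset_sealed_minimal D :
  minset [pred D | (D != set0) && sealed D] D ->
  minimal_forced_both G (om x) (om y) (coalP D) (coalQ D).
Proof.
case/minsetP => /andP[D0 sD] minD; have [fx fy] := sealed_forced sD.
split=> // [|CP CQ CPQ0 /and3P[sP sQ neq] [fx' fy']].
  case/set0Pn: D0 => -[i|j] Da; apply/orP; [left|right]; apply/set0Pn.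
    by exists i; rewrite inE.
  by exists j; rewrite inE.
have sub : coalition CP CQ \subset D.
  apply/subsetP => -[i|j]; rewrite inE.
    by move/(subsetP sP); rewrite inE.
  by move/(subsetP sQ); rewrite inE.
have C0 : coalition CP CQ != set0.
  case/orP: CPQ0 => /set0Pn[k Ck]; apply/set0Pn.
    by exists (inl k); rewrite inE.
  by exists (inr k); rewrite inE.
have /= E := minD _ _ sub; rewrite C0 forced_sealed //= in E.
by move: neq; rewrite -E // coalPK coalQK !eqxx.
Qed.

Lemma nondegenerate_same_partner C : C != set0 -> C \subset zero_gain -> sealed C ->
  exists2 a, a \in C & same_partner a.
Proof.
move=> C0 CZ sC; have PC : (C != set0) && sealed C by rewrite C0.
have [D minD DC] := @minset_exists _ [pred D | (D != set0) && sealed D] C PC.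
have /andP[D0 sD] := minsetp minD; have [fx fy] := sealed_forced sD.
have DZ a : a \in D -> pgain a = 0.
  by move/(subsetP DC)/(subsetP CZ); rewrite inE => /eqP.
have same_payoff :
    forced_payoff G (om x) (coalP D) (coalQ D) =
    forced_payoff G (om y) (coalP D) (coalQ D).
  rewrite (forced_payoffE Sx fx) (forced_payoffE Sy fy).
  congr (_ + _); apply: eq_bigr => k; rewrite inE => /DZ /= /eqP.
    by rewrite subr_eq0 => /eqP.
  by rewrite subr_eq0 => /eqP.
have [cP cQ] := ND (stable_matching Sx) (stable_matching Sy)
                   (minset_sealed_minimal minD) same_payoff.
case/set0Pn: D0 => a Da; exists a; first exact: (subsetP DC).
apply/forallP => b; apply/eqP.
case: a Da b => [i|j] Da [i'|j'] //=.
  have Pi : i \in coalP D by rewrite inE.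
  by apply/idP/idP => /(cP _ _ Pi).
have Qj : j \in coalQ D by rewrite inE.
by apply/idP/idP => /(cQ _ _ Qj).
Qed.

Definition to_pos : {set agent} := reach succ zero_gain pos_gain.
Definition from_neg : {set agent} := reach [rel a b | succ b a] zero_gain neg_gain.
Definition undecided : {set agent} :=
  [set a in zero_gain | [&& a \notin to_pos, a \notin from_neg & ~~ same_partner a]].

Lemma undecided_succ u w : succ u w ->
  u \in undecided -> w \notin undecided -> rigid_link u w.
Proof.
move=> uw /setIdP[Zu /and3P[ntu nfu nsu]].
have /andP[npw ntw] : (w \notin pos_gain) && (w \notin to_pos).
  rewrite -negb_or; apply: contra ntu => wB.
  by apply: (reach_closed Zu uw); rewrite inE.
have nfw : w \notin from_neg.
  apply/negP => /reach_succ[v /= vw]; rewrite (succ_inj vw uw) !inE (negbTE nfu).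
  by move: Zu; rewrite inE => /eqP ->; rewrite ltxx.
have nsw : ~~ same_partner w.
  apply: contra nsu => /(same_partner_pred u); rewrite uw => /esym wu.
  exact: succ2_same_partner uw wu.
rewrite inE ntw nfw nsw !andbT => Zw; apply: contraT => flex.
move: Zu Zw npw; rewrite !inE -leNgt => /eqP gu gw0 gw_le0.
have : pgain w < 0 by rewrite lt_neqAle gw0.
by have := succ_flex uw flex; lra.
Qed.

Lemma undecided_pred u w : succ u w ->
  w \in undecided -> u \notin undecided -> rigid_link u w.
Proof.
move=> uw /setIdP[Zw /and3P[ntw nfw nsw]].
have /andP[nnu nfu] : (u \notin neg_gain) && (u \notin from_neg).
  rewrite -negb_or; apply: contra nfw => uB.
  by apply: (reach_closed Zw uw); rewrite inE.
have ntu : u \notin to_pos.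
  apply/negP => /reach_succ[v uv]; rewrite -(succ_fun uw uv) !inE (negbTE ntw).
  by move: Zw; rewrite inE => /eqP ->; rewrite ltxx.
have nsu : ~~ same_partner u.
  apply: contra nsw => /(same_partner_succ w); rewrite uw => /esym wu.
  exact: succ2_same_partner wu uw.
rewrite inE ntu nfu nsu !andbT => Zu; apply: contraT => flex.
move: Zw Zu nnu; rewrite !inE -leNgt => /eqP gw gu0 gu_ge0.
have : 0 < pgain u by rewrite lt_neqAle eq_sym gu0.
by have := succ_flex uw flex; lra.
Qed.

Lemma undecided_sealed : sealed undecided.
Proof.
apply/sealedP => u w uw.
case Uu: (u \in undecided); case Uw: (w \in undecided) => //= _.
  by apply: undecided_succ; rewrite ?Uw.
by apply: undecided_pred; rewrite ?Uu.
Qed.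

Lemma undecided0 : undecided = set0.
Proof.
apply/eqP; apply: contraT => U0.
have UZ : undecided \subset zero_gain by apply/subsetP => a /setIdP[].
have [a Ua ca] := nondegenerate_same_partner U0 UZ undecided_sealed.
by move: Ua; rewrite inE ca !andbF.
Qed.

Lemma pos_succ_to_pos a b :
  a \in pos_gain -> succ a b -> b \in zero_gain -> b \in to_pos.
Proof.
move=> Pa ab Zb; apply: contraT => ntb.
have gPa : 0 < pgain a by rewrite inE in Pa.
have nfb : b \notin from_neg.
  apply/negP => /reach_succ[c /= cb]; rewrite (succ_inj cb ab) !inE ltNge ltW //=.
  by move/(subsetP (reach_sub _ _ _)); rewrite inE gt_eqF.
have nsb : ~~ same_partner b.
  apply/negP => /(same_partner_pred a); rewrite ab => /esym /(succ2_pgain ab).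
  by move: Zb; rewrite inE => /eqP ->; lra.
have : b \in undecided by rewrite inE Zb ntb nfb nsb.
by rewrite undecided0 inE.
Qed.

Definition sep : {set agent} := pos_gain :|: to_pos.

Lemma sep_succ a : a \in sep -> exists2 b, succ a b & b \in sep.
Proof.
case/setUP => [Pa | /reach_succ[b ab Bb]]; last by exists b.
have gPa : 0 < pgain a by rewrite inE in Pa.
have [b ab] := pgain_gt0_succ gPa; exists b => //; apply/setUP.
have := succ_pgain_ge0 ab gPa; rewrite le_eqVlt => /orP[/eqP gb0 | gPb].
  by right; apply: pos_succ_to_pos Pa ab _; rewrite inE -gb0.
by left; rewrite inE.
Qed.

Lemma sep_closed a b : succ a b -> (a \in sep) = (b \in sep).
Proof.
move=> ab; apply/idP/idP => [/sep_succ[c ac] | bX].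
  by rewrite (succ_fun ab ac).
by have [c cb cX] := pred_in_of_succ_in succ_inj sep_succ bX; rewrite (succ_inj ab cb).
Qed.

Lemma sep_pgain_ge0 a : a \in sep -> 0 <= pgain a.
Proof.
case/setUP => [| /(subsetP (reach_sub _ _ _))]; rewrite inE; first exact: ltW.
by move/eqP ->.
Qed.

Lemma sep_pgain_le0 a : a \notin sep -> pgain a <= 0.
Proof. by rewrite inE negb_or inE -leNgt => /andP[]. Qed.

End TwoStable.

Lemma exists_separating x y : stable G x -> stable G y -> nondegenerate G ->
  exists X : {set agent},
    [/\ matching_closed (om x) X, matching_closed (om y) X,
        forall a, a \in X -> 0 <= pgain x y a &
        forall a, a \notin X -> pgain x y a <= 0].
Proof.
move=> Sx Sy ND; exists (sep x y); split.
- by move=> i j xij; apply: (sep_closed Sx Sy ND (a := inl i) (b := inr j)).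
- by move=> i j yij; symmetry; apply: (sep_closed Sx Sy ND (a := inr j) (b := inl i)).
- exact: sep_pgain_ge0.
- exact: sep_pgain_le0.
Qed.

Definition splice x y (X : {set agent}) : outcome R n :=
  Outcome [ffun i => ou (if inl i \in X then x else y) i]
          [ffun j => ov (if inr j \in X then x else y) j]
          [set p | p \in om (if inl p.1 \in X then x else y)].

Section Splice.
Variables (x y : outcome R n) (X : {set agent}).
Hypotheses (Sx : stable G x) (Sy : stable G y).
Hypotheses (Cx : matching_closed (om x) X) (Cy : matching_closed (om y) X).

Local Notation side a := (if a \in X then x else y).
Local Notation s := (splice x y X).

Lemma stable_side a : stable G (side a).
Proof. by case: ifP. Qed.

Lemma side_matched a i j : (i, j) \in om (side a) -> side (inl i) = side (inr j).
Proof. by case: ifP => _ ij; [rewrite (Cx ij) | rewrite (Cy ij)]. Qed.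

Lemma splice_memE i j : ((i, j) \in om s) = ((i, j) \in om (side (inl i))).
Proof. by rewrite inE. Qed.

Lemma splice_memE' i j : ((i, j) \in om s) = ((i, j) \in om (side (inr j))).
Proof.
rewrite splice_memE; apply/idP/idP => ij.
  by rewrite -(side_matched ij).
by rewrite (side_matched ij).
Qed.

Lemma splice_matching : is_matching (om s).
Proof.
move=> i j i' j' ij ij'; split=> [Ei | Ej]; subst.
  move: ij ij'; rewrite !splice_memE => ij ij'.
  exact: (stable_matching (stable_side (inl i')) ij ij').1.
move: ij ij'; rewrite !splice_memE' => ij ij'.
exact: (stable_matching (stable_side (inr j')) ij ij').2.
Qed.

Lemma splice_pair i j : (i, j) \in om s ->
  [/\ (i, j) \in om (side (inl i)), ou s i = ou (side (inl i)) i
    & ov s j = ov (side (inl i)) j].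
Proof. by rewrite splice_memE => ij; rewrite !ffunE -(side_matched ij). Qed.

Lemma splice_tight : tight (om s) (ou s) (ov s).
Proof.
split.
- move=> i j /splice_pair[ij -> ->].
  by have [uv _ _] := stable_tight (stable_side (inl i)); apply: uv.
- move=> i Ui; rewrite ffunE; have [_ u0 _] := stable_tight (stable_side (inl i)).
  apply: u0; apply: contra Ui => /imsetP[[i' j] ij /= Ei]; subst i'.
  by apply/imsetP; exists (i, j); rewrite ?splice_memE.
- move=> j Vj; rewrite ffunE; have [_ _ v0] := stable_tight (stable_side (inr j)).
  apply: v0; apply: contra Vj => /imsetP[[i j'] ij /= Ej]; subst j'.
  by apply/imsetP; exists (i, j); rewrite ?splice_memE'.
Qed.

Lemma feasible_splice : feasible G s.
Proof.
split.
- split=> [i|j]; rewrite ffunE.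
    exact: (stable_ge0 (stable_side (inl i))).1.
  exact: (stable_ge0 (stable_side (inr j))).2.
- exact: splice_matching.
- move=> i j /splice_pair[ij -> ->].
  by case: (stable_side (inl i)) => -[_ _ rigP _ _] _; apply: rigP.
- move=> i j /splice_pair[ij -> ->].
  by case: (stable_side (inl i)) => -[_ _ _ rigQ _] _; apply: rigQ.
- exact: tight_sum splice_matching splice_tight.
Qed.

End Splice.

Lemma stable_of_dominating x y z : stable G x -> stable G y -> feasible G z ->
  (forall i j, (ou x i <= ou z i /\ ov x j <= ov z j) \/
               (ou y i <= ou z i /\ ov y j <= ov z j)) ->
  stable G z.
Proof.
move=> Sx Sy Fz dom; split=> // i j.
by case: (dom i j) => -[le_u le_v]; apply: unblocked_mono le_u le_v _;
  apply: stable_unblocked.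
Qed.

Lemma stable_join_max_min x y z : stable G x -> stable G y -> feasible G z ->
  (forall i, ou z i = Num.max (ou x i) (ou y i)) ->
  (forall j, ov z j = Num.min (ov x j) (ov y j)) ->
  stable_join G x y z.
Proof.
move=> Sx Sy Fz zu zv; split.
- apply: stable_of_dominating Sx Sy Fz _ => i j; rewrite zu zv.
  case: (leP (ov x j) (ov y j)) => [le | /ltW le]; [left | right];
    by rewrite ?(min_l le) ?(min_r le) le_max !lexx ?orbT.
- by split=> [i|j]; rewrite ?zu ?zv ?le_max ?ge_min lexx.
- by split=> [i|j]; rewrite ?zu ?zv ?le_max ?ge_min lexx orbT.
- move=> w _ [wxu wxv] [wyu wyv].
  by split=> [i|j]; rewrite ?zu ?zv ?ge_max ?le_min ?wxu ?wyu ?wxv ?wyv.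
Qed.

Lemma stable_meet_min_max x y z : stable G x -> stable G y -> feasible G z ->
  (forall i, ou z i = Num.min (ou x i) (ou y i)) ->
  (forall j, ov z j = Num.max (ov x j) (ov y j)) ->
  stable_meet G x y z.
Proof.
move=> Sx Sy Fz zu zv; split.
- apply: stable_of_dominating Sx Sy Fz _ => i j; rewrite zu zv.
  case: (leP (ou x i) (ou y i)) => [le | /ltW le]; [left | right];
    by rewrite ?(min_l le) ?(min_r le) le_max !lexx ?orbT.
- by split=> [i|j]; rewrite ?zu ?zv ?ge_min ?le_max lexx.
- by split=> [i|j]; rewrite ?zu ?zv ?ge_min ?le_max lexx orbT.
- move=> w _ [xwu xwv] [ywu ywv].
  by split=> [i|j]; rewrite ?zu ?zv ?le_min ?ge_max ?xwu ?ywu ?xwv ?ywv.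
Qed.

Section Separated.
Variables (x y : outcome R n) (X : {set agent}).
Hypotheses (Sx : stable G x) (Sy : stable G y).
Hypotheses (Cx : matching_closed (om x) X) (Cy : matching_closed (om y) X).
Hypotheses (gainX : forall a, a \in X -> 0 <= pgain x y a)
           (gainNX : forall a, a \notin X -> pgain x y a <= 0).

Lemma splice_join : stable_join G x y (splice x y X).
Proof.
apply: stable_join_max_min Sx Sy (feasible_splice Sx Sy Cx Cy) _ _ => [i|j];
  rewrite ffunE; case: ifP => [/gainX | /negbT/gainNX] /=; rewrite ?subr_ge0 ?subr_le0.
- by move/max_l.
- by move/max_r.
- by move/min_l.
- by move/min_r.
Qed.

Lemma splice_meet : stable_meet G x y (splice y x X).
Proof.
apply: stable_meet_min_max Sx Sy (feasible_splice Sy Sx Cy Cx) _ _ => [i|j];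
  rewrite ffunE; case: ifP => [/gainX | /negbT/gainNX] /=; rewrite ?subr_ge0 ?subr_le0.
- by move/min_r.
- by move/min_l.
- by move/max_r.
- by move/max_l.
Qed.

End Separated.

End RiFle.

Theorem theorem2 (R : realType) (n : nat) (G : rifle_game R n) :
  nonneg_game G -> nondegenerate G ->
  forall x y : outcome R n, stable G x -> stable G y ->
    (exists z, stable_join G x y z) /\ (exists z, stable_meet G x y z).
Proof.
move=> _ ND x y Sx Sy.
have [X [Cx Cy gainX gainNX]] := exists_separating Sx Sy ND.
split; [exists (splice x y X) | exists (splice y x X)].
  exact: splice_join Sx Sy Cx Cy gainX gainNX.
exact: splice_meet Sx Sy Cx Cy gainX gainNX.
Qed.
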